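(* Every closed convex subset of $\mathbb{R}^2$ is drawable.
   Context: For $A\subseteq\mathbb{R}^2$ let $N(A)=\{x\in\mathbb{R}^2: |x-a|<1 \text{ for some } a\in A\}$. Let $\mathcal{D}_1=\{N(A_1): A_1\subseteq\mathbb{R}^2\}$ and for $n\ge 2$ let $\mathcal{D}_n=\{D\cup N(A_n): D\in\mathcal{D}_{n-1}, A_n\subseteq\mathbb{R}^2\}$ if $n$ is odd and $\mathcal{D}_n=\{D\setminus N(A_n): D\in\mathcal{D}_{n-1}, A_n\subseteq\mathbb{R}^2\}$ if $n$ is even. A set is drawable if it lies in $\mathcal{D}=\bigcup_{n\ge1}\mathcal{D}_n$. *)

From Stdlib Require Import Reals Lra.
Open Scope R_scope.

Definition pt := (R * R)%type.

Definition dist2 (x a : pt) : R :=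
  sqrt ((fst x - fst a) ^ 2 + (snd x - snd a) ^ 2).

Definition N (A : pt -> Prop) : pt -> Prop :=
  fun x => exists a, A a /\ dist2 x a < 1.

(* Dn n S : S belongs to the family D_n (sets are predicates, compared
   extensionally). D_1 = {N(A_1)}; for n >= 2, D_n = {D ∪ N(A_n)} if n odd,
   {D \ N(A_n)} if n even, with D in D_{n-1}. *)
Fixpoint Dn (n : nat) (X : pt -> Prop) : Prop :=
  match n with
  | O => False
  | Datatypes.S m =>
    match m with
    | O => exists A : pt -> Prop, forall x, X x <-> N A x
    | _ => exists (D : pt -> Prop) (A : pt -> Prop),
             Dn m D /\
             (forall x, X x <->
                (if Nat.even n then D x /\ ~ N A x else D x \/ N A x))
    end
  end.

Definition drawable (S : pt -> Prop) : Prop := exists n, (1 <= n)%nat /\ Dn n S.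

Definition convex (C : pt -> Prop) : Prop :=
  forall x y t, C x -> C y -> 0 <= t <= 1 ->
    C ((1 - t) * fst x + t * fst y, (1 - t) * snd x + t * snd y).

Definition closed2 (C : pt -> Prop) : Prop :=
  forall x, ~ C x -> exists e, 0 < e /\ forall y, dist2 x y < e -> ~ C y.

(** Let x be a point of N(C) outside the closed convex set C, and r = dist(x, C),
    so 0 < r < 1.  Since r / (1 - r) > r, some c0 in C has |x - c0| < r / (1 - r)
    (no nearest point is needed).  Let a be the image of x under the homothety h of
    centre c0 and ratio 1/r.  By convexity h^-1 maps C into C, so for c in C,
    |c - a| = |h^-1 c - x| / r >= 1, while |x - a| = (1/r - 1) |x - c0| < 1.
    Hence C = N(C) \ N(A), where A is the set of centres of open unit disks
    missing C, and C is in D_2. *)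
From Stdlib Require Import Reals Lra Classical.
Open Scope R_scope.

Lemma exists_inf {T : Type} (P : T -> Prop) (f : T -> R) (t0 : T) (b : R) :
  P t0 -> (forall t, P t -> b <= f t) ->
  exists r, (forall t, P t -> r <= f t) /\
            (forall l, r < l -> exists t, P t /\ f t < l).
Proof.
  intros Pt0 Hb.
  set (E := fun y => exists t, P t /\ y = - f t).
  assert (HE : bound E).
  { exists (- b). intros y [t [Pt ->]]. specialize (Hb t Pt). lra. }
  destruct (completeness E HE (ex_intro _ (- f t0) (ex_intro _ t0 (conj Pt0 eq_refl))))
    as [s [Hub Hlub]].
  exists (- s). split.
  - intros t Pt. assert (- f t <= s) by (apply Hub; exists t; auto). lra.
  - intros l Hl. apply NNPP. intro Hnone.
    assert (s <= - l); [|lra].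
    apply Hlub. intros y [t [Pt ->]].
    destruct (Rlt_le_dec (f t) l) as [Hlt|Hge]; [exfalso; eauto|lra].
Qed.

Lemma dist2_sym (x y : pt) : dist2 x y = dist2 y x.
Proof. unfold dist2. f_equal. ring. Qed.

Lemma dist2_refl (x : pt) : dist2 x x = 0.
Proof.
  unfold dist2. replace ((fst x - fst x) ^ 2 + (snd x - snd x) ^ 2) with 0 by ring.
  exact sqrt_0.
Qed.

Lemma sqrt_scale (k y : R) : sqrt (k ^ 2 * y) = Rabs k * sqrt y.
Proof.
  rewrite sqrt_mult_alt by (apply pow2_ge_0).
  now rewrite <- Rsqr_pow2, sqrt_Rsqr_abs.
Qed.

Definition homothety (o : pt) (k : R) (x : pt) : pt :=
  (fst o + k * (fst x - fst o), snd o + k * (snd x - snd o)).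

Lemma homothety_comp (o : pt) (k l : R) (x : pt) :
  homothety o k (homothety o l x) = homothety o (k * l) x.
Proof. unfold homothety; simpl; f_equal; ring. Qed.

Lemma homothety_1 (o x : pt) : homothety o 1 x = x.
Proof. unfold homothety; destruct x; simpl; f_equal; ring. Qed.

Lemma dist2_homothety (o : pt) (k : R) (x y : pt) :
  dist2 (homothety o k x) (homothety o k y) = Rabs k * dist2 x y.
Proof.
  unfold dist2, homothety; simpl. rewrite <- sqrt_scale. f_equal. ring.
Qed.

Lemma dist2_homothety_ratio (o : pt) (k l : R) (x : pt) :
  dist2 (homothety o k x) (homothety o l x) = Rabs (k - l) * dist2 x o.
Proof.
  unfold dist2, homothety; simpl. rewrite <- sqrt_scale. f_equal. ring.
Qed.

Lemma convex_homothety (C : pt -> Prop) (o x : pt) (k : R) :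
  convex C -> C o -> C x -> 0 <= k <= 1 -> C (homothety o k x).
Proof.
  intros Hcv Ho Hx Hk.
  replace (homothety o k x)
    with ((1 - k) * fst o + k * fst x, (1 - k) * snd o + k * snd x)
    by (unfold homothety; f_equal; ring).
  exact (Hcv o x k Ho Hx Hk).
Qed.

Lemma closed2_dist_lower_bound (C : pt -> Prop) (x : pt) :
  closed2 C -> ~ C x -> exists e, 0 < e /\ forall c, C c -> e <= dist2 x c.
Proof.
  intros Hcl Hx. destruct (Hcl x Hx) as [e [He Hball]].
  exists e. split; [exact He|].
  intros c Hc. destruct (Rlt_le_dec (dist2 x c) e) as [Hlt|Hge]; [|exact Hge].
  exfalso. exact (Hball c Hlt Hc).
Qed.

Lemma convex_dist_homothety (C : pt -> Prop) (o x : pt) (k r : R) :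
  convex C -> C o -> 1 <= k -> (forall c, C c -> r <= dist2 x c) ->
  forall c, C c -> k * r <= dist2 c (homothety o k x).
Proof.
  intros Hcv Ho Hk Hr c Hc.
  assert (Hk_inv : 0 < / k <= 1).
  { split; [apply Rinv_0_lt_compat; lra|].
    rewrite <- Rinv_1. apply Rinv_le_contravar; lra. }
  assert (Hc' : C (homothety o (/ k) c)) by (apply convex_homothety; auto; lra).
  replace c with (homothety o k (homothety o (/ k) c)) at 1
    by (rewrite homothety_comp, Rinv_r, homothety_1 by lra; reflexivity).
  rewrite dist2_homothety, dist2_sym, Rabs_right by lra.
  apply Rmult_le_compat_l; [lra|exact (Hr _ Hc')].
Qed.

Definition far_points (C : pt -> Prop) : pt -> Prop :=
  fun a => forall c, C c -> 1 <= dist2 c a.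

Lemma N_far_points (C : pt -> Prop) (x : pt) :
  closed2 C -> convex C -> ~ C x -> N C x -> N (far_points C) x.
Proof.
  intros Hcl Hcv Hx [c1 [Hc1 Hxc1]].
  destruct (closed2_dist_lower_bound C x Hcl Hx) as [e [He He_le]].
  destruct (exists_inf C (dist2 x) c1 e Hc1 He_le) as [r [Hr_le Hr_approx]].
  assert (Hr_pos : 0 < r).
  { destruct (Rlt_le_dec r e) as [Hre|]; [|lra].
    destruct (Hr_approx e Hre) as [c [Hc Hlt]]. specialize (He_le c Hc). lra. }
  assert (Hr1 : r < 1) by (specialize (Hr_le c1 Hc1); lra).
  destruct (Hr_approx (r / (1 - r))) as [c0 [Hc0 Hxc0]].
  { apply (Rmult_lt_reg_r (1 - r)); [lra|]. field_simplify; nra. }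
  assert (Hk : 1 <= / r) by (rewrite <- Rinv_1; apply Rinv_le_contravar; lra).
  exists (homothety c0 (/ r) x). split.
  - intros c Hc. rewrite <- (Rinv_l r) by lra.
    exact (convex_dist_homothety C c0 x (/ r) r Hcv Hc0 Hk Hr_le c Hc).
  - rewrite <- (homothety_1 c0 x) at 1.
    rewrite dist2_homothety_ratio, Rabs_left1 by lra.
    replace (- (1 - / r)) with ((1 - r) / r) by (field; lra).
    apply Rlt_le_trans with ((1 - r) / r * (r / (1 - r))).
    + apply Rmult_lt_compat_l; [apply Rdiv_lt_0_compat; lra|exact Hxc0].
    + right. field. lra.
Qed.

Lemma closed_convex_eq_N_diff (C : pt -> Prop) :
  closed2 C -> convex C -> forall x, C x <-> N C x /\ ~ N (far_points C) x.
Proof.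
  intros Hcl Hcv x. split.
  - intros Hx. split.
    + exists x. rewrite dist2_refl. auto with real.
    + intros [a [Ha Hxa]]. specialize (Ha x Hx). lra.
  - intros [HNx HNfar]. apply NNPP. intro Hx.
    exact (HNfar (N_far_points C x Hcl Hcv Hx HNx)).
Qed.

Lemma Dn_2_N_diff (A B : pt -> Prop) (X : pt -> Prop) :
  (forall x, X x <-> N A x /\ ~ N B x) -> Dn 2 X.
Proof.
  intros HX. exists (N A), B. split; [exists A; tauto|exact HX].
Qed.

Theorem theorem2p1 : forall C : pt -> Prop, closed2 C -> convex C -> drawable C.
Proof.
  intros C Hcl Hcv. exists 2%nat. split; [auto|].
  apply (Dn_2_N_diff C (far_points C)).
  exact (closed_convex_eq_N_diff C Hcl Hcv).
Qed.
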